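(* Let $P$ be a distribution on $\mathcal{X}$, $R>0$, $K>0$. Then $E_e(P,R,K,0)=E_e(P,R,K)$, where \[ E_e(P,R,K,0)=\min\Big\{\min_{TV\widetilde{V}:\; B_{T\widetilde{V}}\le B_{TV}\le K} F(TV,T\widetilde{V}),\ \min_{TV\widetilde{V}:\; B_{TV}\ge K} F(TV,T\widetilde{V})\Big\}, \] \[ F(TV,T\widetilde{V})=D(TV\|PW)+\big|A_{T\widetilde{V}}-R+|B_{T\widetilde{V}}-K|^{+}\big|^{+}, \] and \[ E_e(P,R,K)=\min_{TV}\Big\{D(TV\|PW)+\big|A_{TV}-R+|B_{TV}-K|^{+}\big|^{+}\Big\}. \]
   Context: $\mathcal{X},\mathcal{Y}$ are finite alphabets and $W(y|x)$ is a conditional distribution on $\mathcal{Y}$ given $\mathcal{X}$. Logs are natural. $TV$, $T\widetilde{V}$ denote joint distributions on $\mathcal{Y}\times\mathcal{X}$ with common $\mathcal{Y}$-marginal $T$ and conditionals $V(x|y)$, $\widetilde{V}(x|y)$; minima are over all such distributions. $PW$ is the joint distribution $P(x)W(y|x)$; $D(TV\|PW)=\sum T(y)V(x|y)\log\frac{T(y)V(x|y)}{P(x)W(y|x)}$; $A_{TV}=\sum T(y)V(x|y)\log\frac{V(x|y)}{P(x)}$; $B_{TV}=\mathbb{E}_{TV}[-\log W(Y|X)]$; $|t|^{+}=\max\{0,t\}$. *)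

From HB Require Import structures.
From mathcomp Require Import all_boot all_order all_algebra.
From mathcomp Require Import all_classical all_reals.
From mathcomp Require Import ereal exp.
Set Implicit Arguments. Unset Strict Implicit. Unset Printing Implicit Defensive.
Import Order.TTheory GRing.Theory Num.Theory.
Local Open Scope classical_set_scope.
Local Open Scope ring_scope.

Section Defs.
Variables (R : realType) (X Y : finType).

Definition is_distr (T : finType) (p : T -> R) : Prop :=
  (forall t, 0 <= p t) /\ \sum_t p t = 1.

(* W(y|x) written W x y: a channel *)
Definition is_channel (W : X -> Y -> R) : Prop := forall x, is_distr (W x).

(* joint distributions Q on Y x X; Q (y,x) = T(y) V(x|y) *)
Definition ymarg (Q : Y * X -> R) (y : Y) : R := \sum_x Q (y, x).

Definition xlogxy (a b : R) : \bar R :=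
  if a == 0 then 0%E else if b == 0 then +oo%E else (a * ln (a / b))%:E.

Definition xnlog (a b : R) : \bar R :=
  if a == 0 then 0%E else if b == 0 then +oo%E else (- (a * ln b))%:E.

Definition Ddiv (P : X -> R) (W : X -> Y -> R) (Q : Y * X -> R) : \bar R :=
  (\sum_(i : Y * X) xlogxy (Q i) (P i.2 * W i.2 i.1))%E.

(* A_{TV} = sum T(y) V(x|y) log (V(x|y) / P(x)) ; V(x|y) = Q(y,x)/T(y) *)
Definition Aterm (P : X -> R) (Q : Y * X -> R) : \bar R :=
  (\sum_(i : Y * X) xlogxy (Q i) (ymarg Q i.1 * P i.2))%E.

Definition Bterm (W : X -> Y -> R) (Q : Y * X -> R) : \bar R :=
  (\sum_(i : Y * X) xnlog (Q i) (W i.2 i.1))%E.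

Definition posp (t : \bar R) : \bar R := maxe t 0%E.

Definition Fobj (P : X -> R) (W : X -> Y -> R) (Rt K : R)
    (Q Q' : Y * X -> R) : \bar R :=
  (Ddiv P W Q + posp (Aterm P Q' - Rt%:E + posp (Bterm W Q' - K%:E)))%E.

(* pairs (TV, T~V): joint distributions with common Y-marginal T *)
Definition same_T_pair (p : (Y * X -> R) * (Y * X -> R)) : Prop :=
  is_distr p.1 /\ is_distr p.2 /\ ymarg p.1 = ymarg p.2.

Definition Ee0 (P : X -> R) (W : X -> Y -> R) (Rt K : R) : \bar R :=
  mine
    (ereal_inf ((fun p => Fobj P W Rt K p.1 p.2) @`
       [set p | same_T_pair p /\
                (Bterm W p.2 <= Bterm W p.1)%E /\ (Bterm W p.1 <= K%:E)%E]))
    (ereal_inf ((fun p => Fobj P W Rt K p.1 p.2) @`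
       [set p | same_T_pair p /\ (K%:E <= Bterm W p.1)%E])).

Definition Ee (P : X -> R) (W : X -> Y -> R) (Rt K : R) : \bar R :=
  ereal_inf ((fun Q => Fobj P W Rt K Q Q) @` [set Q | is_distr Q]).

End Defs.

(** Since [T V(x|y) = TV(y,x) / T(y)], the divergence splits as
    [D(TV||PW) = sum_y T(y) log T(y) + A_{TV} + B_{TV}], whose first term
    depends only on the marginal [T].  Put [g(A, B) = |A - R + |B - K|^+|^+].
    If [A_{T~V} + B_{T~V} <= A_{TV} + B_{TV}], then
    [F(T~V, T~V) <= F(TV, T~V)].  Otherwise [g(A_{TV}, B_{TV}) <= g(A_{T~V},
    B_{T~V})], so [F(TV, TV) <= F(TV, T~V)]: when [B_{T~V} <= B_{TV} <= K]
    both inner positive parts vanish and [A_{TV} <= A_{T~V}]; when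
    [K <= B_{TV}], [g(A_{TV}, B_{TV})] is the positive part of
    [A_{TV} + B_{TV} - R - K].  Thus every admissible pair is dominated by a
    diagonal one, and the diagonal pairs [(TV, TV)] are all admissible. *)
From mathcomp Require Import all_boot all_order all_algebra.
From mathcomp Require Import all_classical all_reals.
From mathcomp Require Import ereal exp ring.
Set Implicit Arguments. Unset Strict Implicit. Unset Printing Implicit Defensive.
Import Order.TTheory GRing.Theory Num.Theory.
Local Open Scope ring_scope.

Section PositivePart.
Variable R : realType.
Implicit Type x : \bar R.
Local Open Scope ereal_scope.

Lemma posp_homo_le : {homo @posp R : x y / x <= y}.
Proof. by move=> x y xy; apply: le_max2. Qed.

Lemma lee_posp x : x <= posp x.
Proof. by rewrite /posp le_max lexx. Qed.

Lemma ge0_posp x : 0 <= x -> posp x = x.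
Proof. by move=> /max_idPl. Qed.

Lemma le0_posp x : x <= 0 -> posp x = 0.
Proof. by move=> /max_idPr. Qed.

End PositivePart.

Section Penalty.
Variables (R : realType) (r k : R).
Local Open Scope ereal_scope.

Definition penalty (a b : \bar R) : \bar R := posp (a - r%:E + posp (b - k%:E)).

Lemma penalty_le (a1 b1 a2 b2 : \bar R) : b2 != -oo ->
  (b2 <= b1 /\ b1 <= k%:E) \/ k%:E <= b1 ->
  a1 + b1 <= a2 + b2 -> penalty a1 b1 <= penalty a2 b2.
Proof.
move=> b2_neqNy [[b21 b1k]|kb1] ab; apply: posp_homo_le.
- have b1_fin : b1 \is a fin_num.
    rewrite fin_numElt (lt_le_trans _ b21) ?ltNye //=.
    by rewrite (le_lt_trans b1k) ?ltey.
  rewrite !le0_posp ?sube_le0 ?(le_trans b21) // !adde0 leeD2r //.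
  by rewrite -(leeD2rE _ _ b1_fin) (le_trans ab) // leeD2l.
- rewrite ge0_posp ?sube_ge0 // addeACA.
  apply: (@le_trans _ _ (a2 - r%:E + (b2 - k%:E))); last exact/leeD2l/lee_posp.
  by rewrite [leRHS]addeACA leeD2r.
Qed.

Lemma min_penalty_le (h a1 b1 a2 b2 : \bar R) : b2 != -oo ->
  (b2 <= b1 /\ b1 <= k%:E) \/ k%:E <= b1 ->
  mine (h + a1 + b1 + penalty a1 b1) (h + a2 + b2 + penalty a2 b2)
    <= h + a1 + b1 + penalty a2 b2.
Proof.
move=> b2_neqNy side; rewrite ge_min.
case: (leP (a1 + b1) (a2 + b2)) => [ab|/ltW ba].
  by rewrite leeD2l ?penalty_le.
by rewrite leeD2r ?orbT // -!addeA leeD2l.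
Qed.

End Penalty.

Section Divergence.
Variables (R : realType) (X Y : finType).
Implicit Types (P : X -> R) (W : X -> Y -> R) (Q : Y * X -> R).

Lemma xlogxy_split (q t p w : R) : 0 <= q <= t -> 0 <= p -> 0 <= w ->
  xlogxy q (p * w) = ((q * ln t)%:E + xlogxy q (t * p) + xnlog q w)%E.
Proof.
move=> /andP[q_ge0 qt] p_ge0 w_ge0; rewrite /xlogxy /xnlog.
have [->|q_neq0] := eqVneq q 0; first by rewrite mul0r !adde0.
have q_gt0 : 0 < q by rewrite lt_def q_neq0.
have t_gt0 := lt_le_trans q_gt0 qt.
have [->|p_neq0] := eqVneq p 0.
  by rewrite !(mul0r, mulr0) eqxx; case: ifP.
have [->|w_neq0] := eqVneq w 0.
  by rewrite !(mul0r, mulr0) eqxx mulf_eq0 gt_eqF // (negbTE p_neq0) addey.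
rewrite !mulf_eq0 (gt_eqF t_gt0) (negbTE p_neq0) (negbTE w_neq0) -!EFinD.
have p_gt0 : 0 < p by rewrite lt_def p_neq0.
have w_gt0 : 0 < w by rewrite lt_def w_neq0.
by rewrite !ln_div ?lnM ?posrE ?mulr_gt0 //; congr _%:E; ring.
Qed.

Lemma le_ymarg Q y x : (forall i, 0 <= Q i) -> Q (y, x) <= ymarg Q y.
Proof.
move=> Q_ge0; rewrite /ymarg (bigD1 x) //= lerDl.
by apply: sumr_ge0 => ? _.
Qed.

Lemma Ddiv_split P W Q : is_channel W -> is_distr P -> (forall i, 0 <= Q i) ->
  Ddiv P W Q =
    ((\sum_y ymarg Q y * ln (ymarg Q y))%:E + Aterm P Q + Bterm W Q)%E.
Proof.
move=> W_ch [P_ge0 _] Q_ge0.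
have -> : \sum_y ymarg Q y * ln (ymarg Q y) =
          \sum_(i : Y * X) Q i * ln (ymarg Q i.1).
  under eq_bigr do rewrite /ymarg mulr_suml.
  by rewrite pair_bigA; apply: eq_bigr => -[].
rewrite /Ddiv /Aterm /Bterm -sumEFin -!big_split /=.
apply: eq_bigr => -[y x] _ /=.
by apply: xlogxy_split; rewrite ?Q_ge0 ?le_ymarg //; case: (W_ch x).
Qed.

Lemma Bterm_neq_ninfty W Q : Bterm W Q != -oo%E.
Proof.
rewrite /Bterm esum_eqNy; apply/existsP => -[i /andP[_]].
by rewrite /xnlog; case: ifP => //; case: ifP.
Qed.

Lemma Fobj_ge_min P W (Rt K : R) Q1 Q2 :
  is_channel W -> is_distr P -> same_T_pair (Q1, Q2) ->
  ((Bterm W Q2 <= Bterm W Q1 /\ Bterm W Q1 <= K%:E) \/ K%:E <= Bterm W Q1)%E ->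
  (mine (Fobj P W Rt K Q1 Q1) (Fobj P W Rt K Q2 Q2) <= Fobj P W Rt K Q1 Q2)%E.
Proof.
move=> W_ch P_distr [/= [Q1_ge0 _] [[Q2_ge0 _] same_T]] side.
rewrite /Fobj !Ddiv_split // same_T.
exact: min_penalty_le (Bterm_neq_ninfty W Q2) side.
Qed.

End Divergence.

Theorem lemma4 (R : realType) (X Y : finType) (W : X -> Y -> R) (P : X -> R)
    (Rt K : R) :
  is_channel W -> is_distr P -> 0 < Rt -> 0 < K ->
  Ee0 P W Rt K = Ee P W Rt K.
Proof.
move=> W_ch P_distr _ _; apply/eqP; rewrite eq_le; apply/andP; split.
  apply/ereal_infP => _ [Q Q_distr <-]; rewrite ge_min.
  have diag : same_T_pair (Q, Q) by [].
  by case/orP: (le_total (Bterm W Q) K%:E) => BK; apply/orP; [left|right];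
    apply: ereal_inf_lbound; exists (Q, Q).
have pair_ge (Q1 Q2 : Y * X -> R) : same_T_pair (Q1, Q2) ->
    ((Bterm W Q2 <= Bterm W Q1 /\ Bterm W Q1 <= K%:E) \/
      K%:E <= Bterm W Q1)%E ->
    (Ee P W Rt K <= Fobj P W Rt K Q1 Q2)%E.
  move=> pair side; apply: le_trans (Fobj_ge_min Rt W_ch P_distr pair side).
  case: pair => Q1_distr [Q2_distr _].
  by rewrite le_min; apply/andP; split; apply: ereal_inf_lbound;
    [exists Q1 | exists Q2].
rewrite le_min; apply/andP; split;
  apply/ereal_infP => _ [[Q1 Q2] [pair side] <-].
  by apply: pair_ge; [|left].
by apply: pair_ge; [|right].
Qed.
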